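(* In the 1-sided False Positive regime, there exists an algorithm that performs $O(m\log m)$ queries on any moldgraph with $m$ edges and finds a realized spanning tree with high probability.
   Context: Problem (graph connectivity with noisy queries): a graph $G=(V,E)$, the moldgraph, with $m$ edges is given. An adversary selects an arbitrary connected spanning subgraph of $G$ to be realized. The algorithm may query an oracle on any edge $e$ (``Is $e$ realized?''), receiving ``Yes''/``No''; each query costs $1$; answers to distinct queries (including repeated queries of the same edge) are independent. Goal: output a spanning tree of $G$ all of whose edges are realized. In the 1-sided False Positive regime: for a realized edge the answer is always ``Yes''; for a non-realized edge the answer is ``Yes'' with a constant probability $p<1/2$ and ``No'' with probability $1-p$. ``With high probability'' means with probability tending to $1$ as $m\to\infty$. *)

From mathcomp Require Import all_boot all_order all_algebra.
Set Implicit Arguments. Unset Strict Implicit. Unset Printing Implicit Defensive.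
Import Order.TTheory GRing.Theory Num.Theory.
Local Open Scope ring_scope.

(* A (simple) graph on vertex set 'I_n is given by its edge set: a set of
   2-element vertex sets. *)
Definition edge_set (n : nat) := {set {set 'I_n}}.

Definition simple_graph n (E : edge_set n) : bool :=
  [forall e in E, #|e| == 2%N].

Definition adj n (F : edge_set n) : rel 'I_n := fun x y => [set x; y] \in F.

Definition connectedb n (F : edge_set n) : bool :=
  [forall x, forall y, connect (adj F) x y].

(* (V, F) has no cycle: every edge is a bridge *)
Definition acyclicb n (F : edge_set n) : bool :=
  [forall e in F, forall x in e, forall y in e,
     (x != y) ==> ~~ connect (adj (F :\ e)) x y].

Definition spanning_treeb n (F : edge_set n) : bool :=
  connectedb F && acyclicb F.

Definition good_output n (E Rz T : edge_set n) : bool :=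
  [&& T \subset E, T \subset Rz & spanning_treeb T].

Variant action (n : nat) := Query of {set 'I_n} | Output of edge_set n.

Definition history n := seq ({set 'I_n} * bool).

Definition algorithm :=
  forall n : nat, edge_set n -> history n -> action n.

(* Probability that the strategy [f], started from history [h], outputs a
   realized spanning tree using at most [k] further queries, in the
   1-sided false-positive model with parameter p (realized edge: always Yes;
   non-realized edge: Yes w.p. p, No w.p. 1-p; answers independent).
   Exceeding the query budget counts as failure. *)
Fixpoint succ_prob (R : ringType) (p : R) n (E Rz : edge_set n)
    (f : history n -> action n) (k : nat) (h : history n) : R :=
  match f h with
  | Output T => if good_output E Rz T then 1 else 0
  | Query e =>
      match k with
      | 0 => 0
      | k'.+1 =>
          if e \in Rz then succ_prob p E Rz f k' (rcons h (e, true))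
          else p * succ_prob p E Rz f k' (rcons h (e, true))
               + (1 - p) * succ_prob p E Rz f k' (rcons h (e, false))
      end
  end.

Definition success_prob (R : ringType) (p : R) (A : algorithm) n
    (E Rz : edge_set n) (k : nat) : R :=
  succ_prob p E Rz (A n E) k [::].

(* Query every edge k = trunc_log 2 m + 1 times and keep the edges that never
   received a No.  Realized edges are always kept, and once every non-realized
   edge has been rejected the kept edges are exactly the realized ones, which
   contain a spanning tree.  A non-realized edge survives its k queries with
   probability p^k, so by the union bound the algorithm fails with probability
   at most m p^k <= (2p)^k, which tends to 0 as m grows because 2p < 1.
   The union bound is run along the query tree through [failure_potential]:
   the sum, over the non-realized edges not yet rejected, of p to the number of
   their remaining queries.  Averaged over the next answer it is unchanged, so
   1 minus it bounds the success probability from below. *)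

From mathcomp Require Import all_boot all_order all_algebra.
From mathcomp Require Import ring lra.
Import Order.TTheory GRing.Theory Num.Theory.
Set Implicit Arguments. Unset Strict Implicit.
Local Open Scope ring_scope.

Lemma adj_sym n (F : edge_set n) : symmetric (adj F).
Proof. by move=> x y; rewrite /adj setUC. Qed.

Lemma connect_adj_setD1 n (F : edge_set n) (x y : 'I_n) :
  connect (adj (F :\ [set x; y])) x y ->
  subrel (connect (adj F)) (connect (adj (F :\ [set x; y]))).
Proof.
move=> cxy; apply: connect_sub => a b ab.
have [abxy | abxy] := eqVneq [set a; b] [set x; y]; last first.
  by apply: connect1; rewrite /adj !inE abxy.
have ax : a \in [set x; y] by rewrite -abxy set21.
have bx : b \in [set x; y] by rewrite -abxy set22.
move: ax bx => /set2P[]-> /set2P[]-> //.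
by rewrite (sym_connect_sym (@adj_sym n _)).
Qed.

Lemma cycle_edge_of_not_acyclic n (F : edge_set n) :
  simple_graph F -> ~~ acyclicb F ->
  exists x y : 'I_n, [set x; y] \in F /\ connect (adj (F :\ [set x; y])) x y.
Proof.
move=> simF /forall_inPn[e eF /forall_inPn[x xe /forall_inPn[y ye]]].
rewrite negb_imply negbK => /andP[xy cxy].
suff exy : e = [set x; y] by exists x, y; rewrite -exy.
apply/eqP; rewrite eq_sym eqEcard (eqP (forall_inP simF e eF)) cards2 xy.
by rewrite andbT; apply/subsetP => z /set2P[]->.
Qed.

Lemma connectedb_has_spanning_tree n (F : edge_set n) :
  simple_graph F -> connectedb F ->
  exists2 T : edge_set n, T \subset F & spanning_treeb T.
Proof.
elim: {F}#|F| {-2}F (leqnn #|F|) => [|c IH] F leFc simF conF.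
  exists F => //; rewrite /spanning_treeb conF /=.
  by move: leFc; rewrite leqn0 => /eqP/cards0_eq->; apply/forall_inP => e; rewrite inE.
have [acF | /(cycle_edge_of_not_acyclic simF)[x [y [xyF cxy]]]] := boolP (acyclicb F).
  by exists F; rewrite /spanning_treeb ?conF.
have subF : F :\ [set x; y] \subset F by exact: subD1set.
have [|||T sT stT] := IH (F :\ [set x; y]).
- by move: leFc; rewrite (cardsD1 [set x; y] F) xyF.
- by apply/forall_inP => e /(subsetP subF); apply: (forall_inP simF).
- apply/forallP => u; apply/forallP => v.
  exact/(connect_adj_setD1 cxy)/(forallP (forallP conF u) v).
by exists T => //; apply: subset_trans sT subF.
Qed.

Definition accepted n (E : edge_set n) (h : history n) : edge_set n :=
  [set e in E | (e, false) \notin h].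

Definition spanning_subtree n (F : edge_set n) : edge_set n :=
  odflt set0 [pick T : edge_set n | (T \subset F) && spanning_treeb T].

Definition query_schedule n (E : edge_set n) (s : seq {set 'I_n}) :
    history n -> action n := fun h =>
  if (size h < size s)%N then Query (nth set0 s (size h))
  else Output (spanning_subtree (accepted E h)).

Definition rounds n (k : nat) (E : edge_set n) : seq {set 'I_n} :=
  flatten (nseq k (enum E)).

Definition repeated_query_alg : algorithm :=
  fun n E => query_schedule E (rounds (trunc_log 2 #|E|).+1 E).

Lemma size_rounds n k (E : edge_set n) : size (rounds k E) = (k * #|E|)%N.
Proof. by rewrite size_flatten /shape map_nseq sumn_nseq cardE mulnC. Qed.

Lemma count_mem_rounds n k (E : edge_set n) e :
  count_mem e (rounds k E) = (k * (e \in E))%N.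
Proof.
by rewrite count_flatten map_nseq sumn_nseq count_uniq_mem ?enum_uniq // mem_enum mulnC.
Qed.

Section Analysis.
Variables (R : numDomainType) (p : R).
Hypotheses (p_ge0 : 0 <= p) (p_le1 : p <= 1).
Variables (n : nat) (E Rz : edge_set n) (s : seq {set 'I_n}).
Hypotheses (simE : simple_graph E) (RzE : Rz \subset E) (conRz : connectedb Rz).

Definition consistent (h : history n) := forall e, (e, false) \in h -> e \notin Rz.

Lemma consistent_rcons h e b :
  consistent h -> b || (e \notin Rz) -> consistent (rcons h (e, b)).
Proof.
move=> ch eb f; rewrite mem_rcons inE => /orP[/eqP[-> bE] | ]; last exact: ch.
by move: eb; rewrite -bE.
Qed.

Definition failure_potential (h : history n) : R :=
  \sum_(e in E | e \notin Rz)
     (if (e, false) \in h then 0 else p ^+ count_mem e (drop (size h) s)).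

Lemma failure_potential_ge0 h : 0 <= failure_potential h.
Proof. by apply: sumr_ge0 => e _; case: ifP => // _; apply: exprn_ge0. Qed.

Lemma good_output_spanning_subtree : good_output E Rz (spanning_subtree Rz).
Proof.
have simRz : simple_graph Rz.
  by apply/forall_inP => e /(subsetP RzE); apply: (forall_inP simE).
have [T0 sT0 stT0] := connectedb_has_spanning_tree simRz conRz.
rewrite /spanning_subtree; case: pickP => [T /andP[sT stT] | noT]; last first.
  by move: (noT T0); rewrite sT0 stT0.
by rewrite /good_output sT stT (subset_trans sT RzE).
Qed.

Lemma accepted_realized h :
  consistent h -> (forall e, e \in E -> e \notin Rz -> (e, false) \in h) ->
  accepted E h = Rz.
Proof.
move=> ch rejE; apply/setP => e; rewrite !inE.
have [eRz | eRz] := boolP (e \in Rz).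
  by rewrite (subsetP RzE e eRz); apply/negP => /ch; rewrite eRz.
by case eE: (e \in E); rewrite // rejE.
Qed.

Lemma failure_potential_output h b :
  (size s <= size h)%N -> consistent h ->
  1 - failure_potential h <= succ_prob p E Rz (query_schedule E s) b h.
Proof.
move=> sh ch.
have -> : succ_prob p E Rz (query_schedule E s) b h =
          (if good_output E Rz (spanning_subtree (accepted E h)) then 1 else 0).
  by case: b => [|b]; rewrite /= /query_schedule ltnNge sh.
have [surv | ] := boolP [exists e, [&& e \in E, e \notin Rz & (e, false) \notin h]].
  have [e /and3P[eE eRz eh]] := existsP surv.
  suff fp_ge1 : 1 <= failure_potential h.
    by case: ifP => _; rewrite ?subr_le0 // lerBlDr lerDl failure_potential_ge0.
  rewrite /failure_potential (bigD1 e) ?eE //= (negbTE eh) drop_oversize //= lerDl.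
  by apply: sumr_ge0 => f _; case: ifP => // _; apply: exprn_ge0.
move/existsPn => nosurv; rewrite (accepted_realized ch) ?good_output_spanning_subtree.
  by rewrite lerBlDr lerDl failure_potential_ge0.
by move=> e eE eRz; move: (nosurv e); rewrite eE eRz /= negbK.
Qed.

Section Step.
Variable h : history n.
Hypothesis (lt_h_s : (size h < size s)%N).
Let e0 := nth set0 s (size h).

Lemma count_mem_drop_query e :
  count_mem e (drop (size h) s) = ((e0 == e) + count_mem e (drop (size h).+1 s))%N.
Proof. by rewrite (drop_nth set0 lt_h_s). Qed.

Lemma failure_potential_rcons_realized b :
  e0 \in Rz -> failure_potential (rcons h (e0, b)) = failure_potential h.
Proof.
move=> e0Rz; apply: eq_bigr => e /andP[_ eRz].
have e0e : (e0 == e) = false by apply: contraNF eRz => /eqP<-.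
by rewrite size_rcons count_mem_drop_query e0e mem_rcons inE xpair_eqE eq_sym e0e.
Qed.

Lemma failure_potential_split :
  failure_potential h =
  p * failure_potential (rcons h (e0, true)) +
  (1 - p) * failure_potential (rcons h (e0, false)).
Proof.
rewrite !mulr_sumr -big_split; apply: eq_bigr => e _ /=.
rewrite !size_rcons count_mem_drop_query !mem_rcons !inE !xpair_eqE !eqxx andbF andbT /=.
rewrite ![_ == e0]eq_sym.
have [<- | _] := eqVneq e0 e; rewrite /= ?add0n ?add1n.
  by case: ifP => _; rewrite ?mulr0 ?addr0 ?exprS.
by case: ifP => _; rewrite ?mulr0 ?addr0 // -mulrDl subrKC mul1r.
Qed.
End Step.

Lemma failure_potential_le_succ_prob h b :
  (size s <= size h + b)%N -> consistent h ->
  1 - failure_potential h <= succ_prob p E Rz (query_schedule E s) b h.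
Proof.
elim: b h => [|b IH] h sb ch.
  by rewrite addn0 in sb; exact: failure_potential_output.
have [lt_h_s | le_s_h] := ltnP (size h) (size s); last exact: failure_potential_output.
set e0 := nth set0 s (size h).
have IHq c : consistent (rcons h (e0, c)) ->
    1 - failure_potential (rcons h (e0, c)) <=
    succ_prob p E Rz (query_schedule E s) b (rcons h (e0, c)).
  by apply: IH; rewrite size_rcons addSnnS.
have ct : consistent (rcons h (e0, true)) by exact: consistent_rcons.
rewrite /= {1}/query_schedule lt_h_s; case: ifP => e0Rz.
  by rewrite -(failure_potential_rcons_realized lt_h_s true e0Rz); apply: IHq.
have cf : consistent (rcons h (e0, false)) by apply: consistent_rcons => //=; apply: negbT.
have q_ge0 : 0 <= 1 - p by rewrite subr_ge0.
have IHt := ler_wpM2l p_ge0 (IHq _ ct).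
have IHf := ler_wpM2l q_ge0 (IHq _ cf).
have -> : 1 - failure_potential h =
  p * (1 - failure_potential (rcons h (e0, true))) +
  (1 - p) * (1 - failure_potential (rcons h (e0, false))).
  by rewrite (failure_potential_split lt_h_s); ring.
exact: lerD.
Qed.
End Analysis.

Lemma succ_prob_query_schedule (R : numDomainType) (p : R) n (E Rz : edge_set n) s :
  0 <= p <= 1 -> simple_graph E -> Rz \subset E -> connectedb Rz ->
  1 - \sum_(e in E | e \notin Rz) p ^+ count_mem e s <=
  succ_prob p E Rz (query_schedule E s) (size s) [::].
Proof.
move=> /andP[p_ge0 p_le1] simE RzE conRz.
rewrite (_ : \sum_(e in E | e \notin Rz) _ = failure_potential p E Rz s [::]).
  by apply: failure_potential_le_succ_prob => // e; rewrite in_nil.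
by apply: eq_bigr => e _; rewrite drop0.
Qed.

Lemma success_prob_repeated_query (R : numDomainType) (p : R) n (E Rz : edge_set n) :
  0 <= p <= 1 -> simple_graph E -> Rz \subset E -> connectedb Rz ->
  1 - (2 * p) ^+ (trunc_log 2 #|E|).+1 <=
  success_prob p repeated_query_alg E Rz (#|E| * (trunc_log 2 #|E|).+1).
Proof.
move=> p01 simE RzE conRz; have [p_ge0 _] := andP p01.
set k := (trunc_log 2 #|E|).+1.
rewrite /success_prob mulnC -size_rounds.
apply: le_trans _ (succ_prob_query_schedule (rounds k E) p01 simE RzE conRz).
rewrite lerD2l lerN2.
have -> : \sum_(e in E | e \notin Rz) p ^+ count_mem e (rounds k E) =
          \sum_(e in E | e \notin Rz) p ^+ k.
  by apply: eq_bigr => e /andP[eE _]; rewrite count_mem_rounds eE muln1.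
apply: le_trans (_ : \sum_(e in E) p ^+ k <= _).
  rewrite [X in _ <= X](bigID (fun e => e \notin Rz)) /= lerDl.
  by apply: sumr_ge0 => e _; apply: exprn_ge0.
rewrite sumr_const exprMn mulrC -[p ^+ k *+ _]mulr_natr -natrX.
by apply: ler_wpM2l; [apply: exprn_ge0 | rewrite ler_nat ltnW // trunc_log_ltn].
Qed.

Lemma bernoulli_ineq (R : realDomainType) (a : R) k :
  0 <= a -> 1 + a *+ k <= (1 + a) ^+ k.
Proof.
move=> a_ge0; elim: k => [|k IH]; first by rewrite mulr0n addr0 expr0.
have a2k : 0 <= a * a *+ k by rewrite mulrn_wge0 // mulr_ge0.
rewrite exprS mulrSr; apply: le_trans (ler_wpM2l _ IH); last lra.
rewrite mulrDr mulr1 mulrnAr; lra.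
Qed.

Lemma expr_eventually_le (R : archiRealFieldType) (q eps : R) :
  0 <= q < 1 -> 0 < eps -> exists K, forall j, (K <= j)%N -> q ^+ j <= eps.
Proof.
move=> /andP[q_ge0 q_lt1] eps_gt0.
suff [K qK] : exists K, q ^+ K <= eps.
  by exists K => j Kj; apply: le_trans qK; apply: ler_wiXn2l => //; apply: ltW.
have [-> | q_neq0] := eqVneq q 0; first by exists 1%N; rewrite expr1 ltW.
have q_gt0 : 0 < q by rewrite lt_def q_neq0.
set a := q^-1 - 1.
have a_gt0 : 0 < a by rewrite subr_gt0 invf_gt1.
have x_ge0 : 0 <= eps^-1 / a by rewrite ltW // divr_gt0 ?invr_gt0.
exists (Num.bound (eps^-1 / a)).
have bound_a : eps^-1 < a *+ Num.bound (eps^-1 / a).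
  by rewrite -mulr_natr -ltr_pdivrMl // mulrC (archi_boundP x_ge0).
have : eps^-1 <= (q^-1) ^+ Num.bound (eps^-1 / a).
  rewrite -[q^-1](subrK 1) addrC; apply: le_trans _ (bernoulli_ineq _ (ltW a_gt0)).
  by apply/ltW/(lt_le_trans bound_a); rewrite lerDr.
by rewrite exprVn lef_pV2 ?posrE ?exprn_gt0 ?invr_gt0.
Qed.

Unset Implicit Arguments.

Theorem lemma7 (R : archiRealFieldType) (p : R) :
  0 <= p -> p < 2^-1 ->
  exists (A : algorithm) (C : nat),
    forall eps : R, 0 < eps ->
    exists M : nat,
      forall (n : nat) (E Rz : edge_set n),
        simple_graph E -> Rz \subset E -> connectedb Rz ->
        (M <= #|E|)%N ->
        1 - eps <= success_prob p A E Rz (C * #|E| * (trunc_log 2 #|E|).+1).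
Proof.
move=> p_ge0 p_lt_half.
have p2_lt1 : 2 * p < 1 by rewrite -ltr_pdivlMl // mulr1.
have p01 : 0 <= p <= 1.
  by rewrite p_ge0 ltW // (lt_trans p_lt_half) // invf_lt1 // ltr1n.
have p2_01 : 0 <= 2 * p < 1 by rewrite p2_lt1 mulr_ge0.
exists repeated_query_alg, 1%N => eps eps_gt0.
have [K p2K] := expr_eventually_le p2_01 eps_gt0.
exists (2 ^ K)%N => n E Rz simE RzE conRz KE.
rewrite mul1n; apply: le_trans _ (success_prob_repeated_query p01 simE RzE conRz).
by rewrite lerD2l lerN2 p2K // leqW // trunc_log_max.
Qed.
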